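(* Let $G$ be a connected graph with vertex set $\{u_1,\dots,u_n\}$, $n\ge2$, and let $\mathcal{H}=\{H_1,\dots,H_n\}$ be a family of connected graphs such that each $H_i$ either has radius $r(H_i)\ge4$, or is not a tree and has girth $\mathtt{g}(H_i)\ge7$. Then $$\dim_l(G\circ\mathcal{H})=\sum_{i=1}^n\dim_l(K_1+H_i)=\sum_{i=1}^n\operatorname{adim}_l(H_i).$$
   Context: All graphs are finite and simple. $d_G$ is shortest-path distance, $d_{G,2}=\min\{d_G,2\}$; $s$ distinguishes $x,y$ w.r.t. $d$ if $d(s,x)\ne d(s,y)$. $\dim_l(G)$ (connected $G$): minimum size of $S\subseteq V(G)$ such that any two adjacent vertices are distinguished w.r.t. $d_G$ by some vertex of $S$. $\operatorname{adim}_l(H)$: minimum size of $S\subseteq V(H)$ such that any two adjacent vertices are distinguished w.r.t. $d_{H,2}$ by some vertex of $S$. $K_1+H$: a new vertex joined to every vertex of $H$. Lexicographic product $G\circ\mathcal{H}$: vertex set $\bigcup_i\{u_i\}\times V(H_i)$, $(u_i,v)\sim(u_j,w)$ iff $u_iu_j\in E(G)$, or $i=j$ and $vw\in E(H_i)$. *)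

From mathcomp Require Import all_boot.
Set Implicit Arguments. Unset Strict Implicit. Unset Printing Implicit Defensive.

Section Graphs.
Variables (T : finType) (e : rel T).

Definition simple_graph := symmetric e /\ irreflexive e.
Definition gconnected := forall x y : T, connect e x y.

Fixpoint ball (k : nat) (x : T) : {set T} :=
  if k is k'.+1 then ball k' x :|: [set y | [exists z in ball k' x, e z y]]
  else [set x].

(* shortest-path distance; (#|T| if unreachable, never used for connected graphs) *)
Definition gdist (x y : T) : nat := find (fun k => y \in ball k x) (iota 0 #|T|).
Definition gdist2 (x y : T) : nat := minn (gdist x y) 2.

Definition local_resolving (d : T -> T -> nat) (S : {set T}) : bool :=
  [forall x, forall y, e x y ==> [exists s in S, d s x != d s y]].

Definition min_local_resolving (d : T -> T -> nat) : nat :=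
  #|[arg min_(S < [set: T] | local_resolving d S) #|S|]|.

Definition local_dim : nat := min_local_resolving gdist.
Definition adj_local_dim : nat := min_local_resolving gdist2.

Definition eccentricity (x : T) : nat := \max_(y : T) gdist x y.
Definition radius : nat := \big[minn/#|T|]_(x : T) eccentricity x.

Definition is_cycle (s : seq T) : bool := [&& uniq s, 3 <= size s & cycle e s].
Definition is_tree : Prop := gconnected /\ forall s, ~~ is_cycle s.
Definition girth_ge (k : nat) : Prop := forall s, is_cycle s -> k <= size s.
End Graphs.

Definition cone_rel (T : finType) (e : rel T) : rel (option T) :=
  fun a b => match a, b with
             | Some x, Some y => e x y
             | None, Some _ | Some _, None => true
             | None, None => false
             end.

(* Lexicographic product G o H, H = (T u, eH u)_{u in V} *)
Definition lex_rel (V : finType) (eG : rel V) (T : V -> finType)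
  (eH : forall u, rel (T u)) : rel {u : V & T u} :=
  fun p q => eG (tag p) (tag q) ||
             ((tag p == tag q) && eH (tag p) (tagged p) (tagged_as p q)).

From mathcomp Require Import all_boot zify.
Set Implicit Arguments. Unset Strict Implicit. Unset Printing Implicit Defensive.

(* Two vertices of one copy of H_i, in K_1 + H_i or in G o H, have a common
   neighbour outside the copy, so their distance is d_{H_i,2}; vertices of
   different copies of G o H are at the G-distance of their copies.  Hence only
   vertices of a copy resolve its internal edges, and they do so as in
   (H_i, d_{H_i,2}): each dimension is at least the sum of the adim_l(H_i).
   Conversely the union of adjacency bases B_i also resolves the edges joining a
   vertex x of H_i to the apex or to an adjacent copy, through any s in B_i not
   adjacent to x: it sees x at distance 0 or 2 and the other end at distance 1.
   Such an s exists when H_i has an edge with both ends at distance >= 3 from x,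
   as B_i resolves that edge and no neighbour of x does.  Radius >= 4 yields such
   an edge directly.  Under girth >= 7, if there were none, the vertex of a cycle
   farthest from x would have both cycle neighbours one level closer (same-level
   edges at levels 1 and 2 close cycles of length <= 5), and two parents at level
   <= 3 close a cycle of length <= 6. *)

Section Distance.
Variables (T : finType) (e : rel T).

Lemma in_ball0 x y : (y \in ball e 0 x) = (y == x).
Proof. by rewrite /= inE. Qed.

Lemma in_ballS k x y :
  (y \in ball e k.+1 x) = (y \in ball e k x) || [exists z in ball e k x, e z y].
Proof. by rewrite /= in_setU in_set. Qed.

Lemma ball_subS k x : ball e k x \subset ball e k.+1 x.
Proof. exact: subsetUl. Qed.

Lemma ball_mono k k' x : k <= k' -> ball e k x \subset ball e k' x.
Proof.
move/subnK <-; elim: (k' - k) => [|n IHn] //=.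
exact: subset_trans IHn (ball_subS _ _).
Qed.

Lemma ball_adj k x z : e x z -> ball e k z \subset ball e k.+1 x.
Proof.
move=> exz; elim: k => [|k IHk].
  by rewrite sub1set in_ballS; apply/orP; right; apply/existsP; exists x;
     rewrite in_ball0 eqxx.
apply/subsetP => y; rewrite in_ballS => /orP[y_in|/existsP[w /andP[w_in ewy]]].
  by apply: (subsetP (ball_subS _ _)); apply: (subsetP IHk).
rewrite in_ballS; apply/orP; right; apply/existsP; exists w.
by rewrite ewy (subsetP IHk).
Qed.

Lemma path_ball x p : path e x p -> last x p \in ball e (size p) x.
Proof.
elim: p x => [|z p IHp] x /=; first by rewrite in_ball0.
by case/andP=> exz /IHp; apply: (subsetP (ball_adj _ exz)).
Qed.

Lemma ball_connect k x y : y \in ball e k x -> connect e x y.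
Proof.
elim: k y => [|k IHk] y; first by rewrite in_ball0 => /eqP ->.
rewrite in_ballS => /orP[/IHk //|/existsP[z /andP[/IHk xz ezy]]].
exact: connect_trans xz (connect1 ezy).
Qed.

Lemma connect_ball x y : connect e x y -> exists2 k, k < #|T| & y \in ball e k x.
Proof.
case/connectP=> p /shortenP[p' p'_path p'_uniq _] ->.
exists (size p'); last exact: path_ball.
by have := max_card (mem (x :: p')); rewrite (card_uniqP p'_uniq) /=.
Qed.

Lemma gdist_le k x y : y \in ball e k x -> gdist e x y <= k.
Proof.
move=> y_in; rewrite /gdist; case: (ltnP k #|T|) => k_lt.
  rewrite leqNgt; apply/negP => /(before_find 0).
  by rewrite nth_iota // add0n y_in.
by apply: leq_trans (find_size _ _) _; rewrite size_iota.
Qed.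

Lemma gdist_ball x y : gdist e x y < #|T| -> y \in ball e (gdist e x y) x.
Proof.
rewrite /gdist => lt_T.
have found : has (fun k => y \in ball e k x) (iota 0 #|T|).
  by rewrite has_find size_iota.
by have := nth_find 0 found; rewrite nth_iota ?add0n.
Qed.

Lemma gdist_lt x y : connect e x y -> gdist e x y < #|T|.
Proof. by case/connect_ball=> k k_lt /gdist_le; move/leq_ltn_trans; apply. Qed.

Lemma gdist0 x : gdist e x x = 0.
Proof. by apply/eqP; rewrite -leqn0; apply: gdist_le; rewrite in_ball0. Qed.

Lemma gdist_eq0 x y : (gdist e x y == 0) = (x == y).
Proof.
apply/idP/idP => [/eqP d0|/eqP->]; last by rewrite gdist0.
have : gdist e x y < #|T| by rewrite d0; apply/card_gt0P; exists x.
by move/gdist_ball; rewrite d0 in_ball0 eq_sym.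
Qed.

Lemma gdist_eq1 x y : x != y -> (gdist e x y == 1) = e x y.
Proof.
move=> xy; apply/idP/idP => [/eqP d1|exy].
  have : gdist e x y < #|T|.
    by have := max_card (mem [set x; y]); rewrite cards2 xy d1.
  move/gdist_ball; rewrite d1 in_ballS in_ball0 eq_sym (negbTE xy) /=.
  by case/existsP=> z /andP[]; rewrite in_ball0 => /eqP->.
rewrite eqn_leq lt0n gdist_eq0 xy andbT; apply: gdist_le.
by rewrite in_ballS; apply/orP; right; apply/existsP; exists x; rewrite in_ball0 eqxx.
Qed.

Lemma gdist_le2 x z y : e x z -> e z y -> gdist e x y <= 2.
Proof.
move=> exz ezy; apply: gdist_le; rewrite in_ballS; apply/orP; right.
apply/existsP; exists z; rewrite ezy andbT; apply: (subsetP (ball_adj _ exz)).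
by rewrite in_ball0.
Qed.

Lemma gdist2E x y : gdist2 e x y = if x == y then 0 else if e x y then 1 else 2.
Proof.
rewrite /gdist2; have [->|xy] := eqVneq x y; first by rewrite gdist0.
rewrite -(gdist_eq1 xy); case: eqP => [->//|d_neq1].
by have := gdist_eq0 x y; rewrite (negbTE xy); case: (gdist e x y) d_neq1 => [|[|n]].
Qed.

Lemma gdist_common_nbr x z y : e x z -> e z y -> gdist e x y = gdist2 e x y.
Proof. by move=> exz ezy; have := gdist_le2 exz ezy; rewrite /gdist2; lia. Qed.

Hypothesis e_conn : gconnected e.

Lemma gdist_adjr v x y : e x y -> gdist e v y <= (gdist e v x).+1.
Proof.
move=> exy; apply: gdist_le; rewrite in_ballS; apply/orP; right.
by apply/existsP; exists x; rewrite exy andbT gdist_ball ?gdist_lt.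
Qed.

Lemma gdist_adjl v s x : e v s -> gdist e v x <= (gdist e s x).+1.
Proof.
by move=> evs; apply/gdist_le/(subsetP (ball_adj _ evs)); rewrite gdist_ball ?gdist_lt.
Qed.

Lemma gdist_parent v x : x != v -> exists2 p, e p x & (gdist e v p).+1 = gdist e v x.
Proof.
move=> xv; have := gdist_ball (gdist_lt (e_conn v x)).
case dx: (gdist e v x) => [|k].
  by move/eqP: dx; rewrite gdist_eq0 eq_sym (negbTE xv).
rewrite in_ballS => /orP[/gdist_le|/existsP[p /andP[/gdist_le p_le epx]]].
  by rewrite dx ltnn.
by exists p => //; have := gdist_adjr v epx; rewrite dx; lia.
Qed.
End Distance.

Definition far_edge (T : finType) (e : rel T) (v : T) : bool :=
  [exists x, exists y, [&& e x y, 3 <= gdist e v x & 3 <= gdist e v y]].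

Lemma far_edgeP (T : finType) (e : rel T) v :
  reflect (exists x y, [/\ e x y, 3 <= gdist e v x & 3 <= gdist e v y]) (far_edge e v).
Proof.
apply: (iffP existsP) => [[x /existsP[y /and3P[]]]|[x [y [exy dx dy]]]].
  by exists x, y.
by exists x; apply/existsP; exists y; rewrite exy dx dy.
Qed.

Section LargeGirth.
Variables (T : finType) (e : rel T).
Hypotheses (e_sym : symmetric e) (e_irr : irreflexive e)
  (e_conn : gconnected e) (girth7 : girth_ge e 7).
Variable v : T.
Local Notation D := (gdist e v).

Lemma adj_neq x y : e x y -> x != y.
Proof. by apply: contraTneq => ->; rewrite e_irr. Qed.

Lemma level_neq x y : D x != D y -> x != y.
Proof. by apply: contraNneq => ->. Qed.

Lemma level0_eq x : D x = 0 -> x = v.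
Proof. by move=> dx; apply/eqP; rewrite eq_sym -(gdist_eq0 e) dx. Qed.

Lemma level1_adj x : D x = 1 -> e v x.
Proof.
move=> dx; rewrite -gdist_eq1 ?dx //.
by apply: level_neq; rewrite gdist0 dx.
Qed.

Lemma level_parent x k : D x = k.+1 -> exists2 p, e p x & D p = k.
Proof.
move=> dx; have [|p epx] := gdist_parent e_conn (x := x) (v := v).
  by apply: level_neq; rewrite gdist0 dx.
by rewrite dx => -[]; exists p.
Qed.

Lemma no_short_cycle s : uniq s -> cycle e s -> 3 <= size s <= 6 -> False.
Proof.
move=> s_uniq s_cycle /andP[s_ge3 s_le6].
have : 7 <= size s by apply: girth7; apply/and3P.
lia.
Qed.

Ltac distinct :=
  match goal with
  | |- is_true (?x != ?y) =>
      first [ done | by rewrite eq_sym | by apply: adj_neq | by rewrite eq_sym; apply: adj_neq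
            | apply: level_neq;
              match goal with Hx : D x = _, Hy : D y = _ |- _ => by rewrite Hx Hy end ]
  end.

(* Refutes the existence of the closed walk [s] of length at most 6: its vertices
   are told apart by their levels, by adjacency, or by a hypothesis. *)
Ltac refute_cycle s :=
  apply: (@no_short_cycle s) => //=;
  rewrite ?inE ?negb_or ?andbT; repeat (apply/andP; split);
  first [ done | by rewrite e_sym | distinct ].

Lemma no_level1_edge x y : D x = 1 -> D y = 1 -> ~~ e x y.
Proof.
move=> dx dy; apply/negP => exy; have dv : D v = 0 by rewrite gdist0.
have evx := level1_adj dx; have evy := level1_adj dy.
refute_cycle [:: v; x; y].
Qed.

Lemma no_level2_edge x y : D x = 2 -> D y = 2 -> ~~ e x y.
Proof.
move=> dx dy; apply/negP => exy; have dv : D v = 0 by rewrite gdist0.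
have [px epx dpx] := level_parent dx; have [py epy dpy] := level_parent dy.
have evpx := level1_adj dpx; have evpy := level1_adj dpy.
have [same_p|pxy] := eqVneq px py; first by subst px; refute_cycle [:: py; x; y].
refute_cycle [:: v; px; x; y; py].
Qed.

Lemma level2_unique_parent a b c : D a = 1 -> D b = 1 -> D c = 2 ->
  e a c -> e b c -> a = b.
Proof.
move=> da db dc eac ebc; have [//|ab] := eqVneq a b; exfalso.
have dv : D v = 0 by rewrite gdist0.
have eva := level1_adj da; have evb := level1_adj db.
refute_cycle [:: v; a; c; b].
Qed.

Lemma level3_unique_parent a b c : D a = 2 -> D b = 2 -> D c = 3 ->
  e a c -> e b c -> a = b.
Proof.
move=> da db dc eac ebc; have [//|ab] := eqVneq a b; exfalso.
have dv : D v = 0 by rewrite gdist0.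
have [pa epa dpa] := level_parent da; have [pb epb dpb] := level_parent db.
have evpa := level1_adj dpa; have evpb := level1_adj dpb.
have [same_p|pab] := eqVneq pa pb; first by subst pa; refute_cycle [:: pb; a; c; b].
refute_cycle [:: v; pa; a; c; b; pb].
Qed.

Lemma level_edge_far x y : e x y -> D x = D y -> far_edge e v.
Proof.
move=> exy dxy; suff d3 : 2 < D x by apply/far_edgeP; exists x, y; rewrite -dxy d3.
case dx: (D x) dxy => [|[|[|k]]] dy //.
- by rewrite (level0_eq dx) (level0_eq (esym dy)) e_irr in exy.
- by rewrite (negbTE (no_level1_edge dx (esym dy))) in exy.
- by rewrite (negbTE (no_level2_edge dx (esym dy))) in exy.
Qed.

Lemma shared_child_far a b c : a != b -> e a c -> e b c ->
  (D a).+1 = D c -> (D b).+1 = D c -> far_edge e v.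
Proof.
move=> ab eac ebc; case dc: (D c) => [|[|[|[|k]]]] // [da] [db].
- by rewrite (level0_eq da) (level0_eq db) eqxx in ab.
- by rewrite (level2_unique_parent da db dc eac ebc) eqxx in ab.
- by rewrite (level3_unique_parent da db dc eac ebc) eqxx in ab.
- by apply/far_edgeP; exists a, c; rewrite da dc.
Qed.

Lemma cycle_far_edge s : is_cycle e s -> far_edge e v.
Proof.
case/and3P=> s_uniq s_ge3 s_cycle.
have [c0 c0s] : exists c0, c0 \in s.
  by case: s s_ge3 {s_uniq s_cycle} => // c0 s' _; exists c0; rewrite mem_head.
case: (arg_maxnP D c0s) => c cs c_max.
have parent x : x \in s -> e x c -> (D x).+1 = D c \/ far_edge e v.
  move=> xs exc; have [dxc|dxc] := eqVneq (D x) (D c).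
    by right; apply: level_edge_far exc dxc.
  by left; move: (c_max x xs) (gdist_adjr e_conn v exc); lia.
have [i s' s_rot] := rot_to cs.
have sub_s : {subset c :: s' <= s} by move=> z; rewrite -s_rot mem_rot.
move: s_uniq s_cycle s_ge3; rewrite -(rot_uniq i) -(rot_cycle i) -(size_rot i) s_rot.
case: s' sub_s {s_rot} => [|a [|a2 s2]] // sub_s /and3P[_ a_notin _].
rewrite /= rcons_path => /and4P[eca _ _ ebc] _.
set b := last a2 s2 in ebc.
have ab : a != b by apply: contraNneq a_notin => ->; apply: mem_last.
have eac : e a c by rewrite e_sym.
have a_in : a \in s by apply/sub_s/mem_behead/mem_head.
have b_in : b \in s by apply/sub_s/mem_behead/mem_behead/mem_last.
have [da|//] := parent a a_in eac.
have [db|//] := parent b b_in ebc.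
exact: shared_child_far ab eac ebc da db.
Qed.
End LargeGirth.

Lemma bigmin_leq (I : eqType) (r : seq I) (F : I -> nat) n i :
  i \in r -> \big[minn/n]_(j <- r) F j <= F i.
Proof.
elim: r => [|j r IHr] //; rewrite inE big_cons => /orP[/eqP<-|/IHr]; first exact: geq_minl.
exact/leq_trans/geq_minr.
Qed.

Lemma bigmin_leq_idx (I : Type) (r : seq I) (F : I -> nat) n :
  \big[minn/n]_(j <- r) F j <= n.
Proof. by elim/big_rec: _ => // j m _; apply/leq_trans/geq_minr. Qed.

Section FarEdges.
Variables (T : finType) (e : rel T).
Hypotheses (e_sym : symmetric e) (e_irr : irreflexive e) (e_conn : gconnected e).

Lemma radius_far_edge v : 4 <= radius e -> far_edge e v.
Proof.
move=> rad4; have : 4 <= eccentricity e v.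
  by apply: leq_trans rad4 (bigmin_leq _ _ (mem_index_enum v)).
rewrite /eccentricity; have [|y ->] := eq_bigmax (gdist e v).
  by apply/card_gt0P; exists v.
move=> dy; have yv : y != v by apply: contraTneq dy => ->; rewrite gdist0.
have [p epy dp] := gdist_parent e_conn yv.
by apply/far_edgeP; exists p, y; split=> //; lia.
Qed.

Lemma not_tree_far_edge v : girth_ge e 7 -> ~ is_tree e -> far_edge e v.
Proof.
move=> girth7; apply: contra_notT => no_far; split=> // s.
exact: contra (@cycle_far_edge _ _ e_sym e_irr e_conn girth7 v s) no_far.
Qed.

Lemma far_edge_everywhere v :
  4 <= radius e \/ (~ is_tree e /\ girth_ge e 7) -> far_edge e v.
Proof. by case=> [/radius_far_edge|[/not_tree_far_edge nt /nt]]. Qed.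

Lemma resolving_nonneighbor v S : far_edge e v -> local_resolving e (gdist2 e) S ->
  exists2 s, s \in S & ~~ e v s.
Proof.
case/far_edgeP=> x [y [exy dx dy]] /forallP/(_ x)/forallP/(_ y)/implyP/(_ exy).
case/existsP=> s /andP[sS d2_neq]; exists s => //; apply: contra d2_neq => evs.
have := gdist_adjl e_conn x evs; have := gdist_adjl e_conn y evs.
by rewrite /gdist2; lia.
Qed.
End FarEdges.

Lemma card_gt0_of_radius_or_cycle (T : finType) (e : rel T) :
  4 <= radius e \/ ~ is_tree e -> 0 < #|T|.
Proof.
case: (posnP #|T|) => // T0; case=> [|not_tree].
  by rewrite leqNgt (leq_ltn_trans (bigmin_leq_idx _ _ _)) // T0.
by case: not_tree; split=> [x|[|x s]] //; have := card0_eq T0 x.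
Qed.

Section MinLocalResolving.
Variables (T : finType) (e : rel T) (d : T -> T -> nat).

Definition local_basis : {set T} :=
  [arg min_(S < [set: T] | local_resolving e d S) #|S|].

Lemma min_local_resolvingE : min_local_resolving e d = #|local_basis|.
Proof. by []. Qed.

Hypothesis setT_resolving : local_resolving e d setT.

Lemma local_basisP : local_resolving e d local_basis.
Proof. by rewrite /local_basis; case: arg_minnP. Qed.

Lemma min_local_resolving_le S : local_resolving e d S -> min_local_resolving e d <= #|S|.
Proof. by rewrite /min_local_resolving; case: arg_minnP => // S0 _; apply. Qed.
End MinLocalResolving.

Lemma local_resolving_setT (T : finType) (e : rel T) (d : T -> T -> nat) :
  irreflexive e -> (forall x y, (d x y == 0) = (x == y)) -> local_resolving e d setT.
Proof.
move=> e_irr d0; apply/forallP=> x; apply/forallP=> y; apply/implyP=> exy.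
have dxx : d x x = 0 by apply/eqP; rewrite d0.
apply/existsP; exists x; rewrite in_setT dxx eq_sym d0.
by apply: contraTneq exy => ->; rewrite e_irr.
Qed.

Lemma gdist_resolving_setT (T : finType) (e : rel T) :
  irreflexive e -> local_resolving e (gdist e) setT.
Proof. by move/local_resolving_setT; apply; apply: gdist_eq0. Qed.

Lemma gdist2_resolving_setT (T : finType) (e : rel T) :
  irreflexive e -> local_resolving e (gdist2 e) setT.
Proof.
by move/local_resolving_setT; apply=> x y; rewrite gdist2E; case: (x == y) => //; case: ifP.
Qed.

Section Cone.
Variables (T : finType) (e : rel T).
Hypotheses (e_sym : symmetric e) (e_irr : irreflexive e) (e_conn : gconnected e).
Local Notation ce := (cone_rel e).

Lemma cone_irr : irreflexive ce.
Proof. by case=> //= x; rewrite e_irr. Qed.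

Lemma cone_gdist x y : gdist ce (Some x) (Some y) = gdist2 e x y.
Proof. by rewrite (@gdist_common_nbr _ _ _ None) // !gdist2E. Qed.

Lemma cone_gdist_apex x : gdist ce (Some x) None = 1.
Proof. by apply/eqP; rewrite gdist_eq1. Qed.

Lemma apex_cone_gdist x : gdist ce None (Some x) = 1.
Proof. by apply/eqP; rewrite gdist_eq1. Qed.

Lemma cone_apex_resolved x S : far_edge e x -> local_resolving e (gdist2 e) S ->
  [exists s in Some @: S, gdist ce s (Some x) != gdist ce s None].
Proof.
move=> far S_res; have [s sS exs] := resolving_nonneighbor e_conn far S_res.
apply/existsP; exists (Some s); rewrite imset_f //= cone_gdist cone_gdist_apex.
by rewrite gdist2E e_sym (negbTE exs); case: ifP.
Qed.

Lemma cone_local_dim_le : (forall v, far_edge e v) -> local_dim ce <= adj_local_dim e.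
Proof.
move=> far; rewrite /local_dim /adj_local_dim.
have S_res := local_basisP (gdist2_resolving_setT e_irr).
rewrite [X in _ <= X]min_local_resolvingE; set S := local_basis _ _ in S_res *.
rewrite -(card_imset _ (@Some_inj _)).
apply: min_local_resolving_le; first exact: gdist_resolving_setT cone_irr.
apply/forallP => p; apply/forallP => q; apply/implyP.
case: p q => [x|] [y|] //= exy.
- move/forallP: S_res => /(_ x)/forallP/(_ y)/implyP/(_ exy)/existsP[s /andP[sS ds]].
  by apply/existsP; exists (Some s); rewrite imset_f // !cone_gdist.
- exact: cone_apex_resolved.
- have /existsP[s /andP[sS ds]] := cone_apex_resolved (far y) S_res.
  by apply/existsP; exists s; rewrite sS eq_sym.
Qed.

Lemma adj_local_dim_le_cone : adj_local_dim e <= local_dim ce.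
Proof.
rewrite /local_dim /adj_local_dim.
have S_res := local_basisP (gdist_resolving_setT cone_irr).
rewrite [X in _ <= X]min_local_resolvingE; set S := local_basis _ _ in S_res *.
pose S' := [set x | Some x \in S].
apply: (@leq_trans #|S'|).
  apply: min_local_resolving_le; first exact: gdist2_resolving_setT.
  apply/forallP => x; apply/forallP => y; apply/implyP => exy.
  move/forallP: S_res => /(_ (Some x))/forallP/(_ (Some y))/implyP/(_ exy).
  case/existsP => -[s|] /andP[sS ds]; last by rewrite !apex_cone_gdist in ds.
  by apply/existsP; exists s; rewrite inE sS -!cone_gdist.
rewrite -(card_imset _ (@Some_inj _)); apply: subset_leq_card.
by apply/subsetP => p /imsetP[x]; rewrite inE => Sx ->.
Qed.

Lemma cone_local_dim : (forall v, far_edge e v) -> local_dim ce = adj_local_dim e.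
Proof. by move=> far; apply/anti_leq; rewrite cone_local_dim_le // adj_local_dim_le_cone. Qed.
End Cone.

Lemma card_sigma_fibers (V : finType) (T : V -> finType) (S : {set {u : V & T u}}) :
  #|S| = \sum_(u : V) #|[set x : T u | Tagged T x \in S]|.
Proof.
rewrite -sum1_card (partition_big (fun p => tag p) xpredT) //=.
apply: eq_bigr => u _.
transitivity #|[set p in S | tag p == u]|.
  by rewrite -sum1_card; apply: eq_bigl => p; rewrite !inE.
rewrite -(card_imset _ (@eq_from_Tagged _ T u)).
apply: eq_card => p; rewrite inE /=; apply/idP/imsetP.
  by case: p => w z /= /andP[Sz /eqP wu]; subst w; exists z; rewrite ?inE.
by case=> x; rewrite inE => Sx ->; rewrite Sx eqxx.
Qed.

Section Lexicographic.
(* Keeps the copy index [u] explicit in the hypotheses below. *)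
Local Unset Implicit Arguments.
Variables (V : finType) (eG : rel V) (T : V -> finType) (eH : forall u, rel (T u)).
Hypotheses (eG_sym : symmetric eG) (eG_irr : irreflexive eG) (eG_conn : gconnected eG)
  (V_ge2 : 1 < #|V|).
Hypotheses (eH_sym : forall u, symmetric (eH u)) (eH_irr : forall u, irreflexive (eH u))
  (eH_conn : forall u, gconnected (eH u)) (T_nonempty : forall u, 0 < #|T u|).
Hypothesis far : forall u v, far_edge (eH u) v.
Local Set Implicit Arguments.
Local Notation L := {u : V & T u}.
Local Notation le := (lex_rel eG eH).

Lemma lex_rel_fiber u (x y : T u) : le (Tagged T x) (Tagged T y) = eH u x y.
Proof. by rewrite /lex_rel /= eG_irr eqxx tagged_asE. Qed.

Lemma lex_irr : irreflexive le.
Proof. by case=> u x; rewrite lex_rel_fiber eH_irr. Qed.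

Lemma exists_nbr u : exists w, eG u w.
Proof.
have : 0 < #|[set~ u]| by rewrite cardsC1; lia.
case/card_gt0P => w; rewrite !inE => wu.
case/connectP: (eG_conn u w) => -[|w' p] /=; first by move=> _ wE; rewrite wE eqxx in wu.
by case/andP=> euw' _ _; exists w'.
Qed.

Lemma lex_gdist_fiber u (x y : T u) : gdist le (Tagged T x) (Tagged T y) = gdist2 (eH u) x y.
Proof.
have [w euw] := exists_nbr u; have /card_gt0P[z _] := T_nonempty w.
have xz : le (Tagged T x) (Tagged T z) by rewrite /lex_rel /= euw.
have zy : le (Tagged T z) (Tagged T y) by rewrite /lex_rel /= eG_sym euw.
by rewrite (gdist_common_nbr xz zy) !gdist2E eq_Tagged lex_rel_fiber.
Qed.

Lemma ball_tag k (p q : L) : q \in ball le k p -> tag q \in ball eG k (tag p).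
Proof.
elim: k q => [|k IHk] q; first by rewrite !in_ball0 => /eqP->.
rewrite !in_ballS => /orP[/IHk->//|/existsP[r /andP[r_in erq]]].
apply/orP; move: erq; rewrite /lex_rel => /orP[eGrq|/andP[/eqP <- _]].
  by right; apply/existsP; exists (tag r); rewrite eGrq IHk.
by left; apply: IHk.
Qed.

Lemma ball_untag k u (x : T u) w : w \in ball eG k u -> w != u ->
  forall y : T w, (Tagged T y : L) \in ball le k (Tagged T x).
Proof.
elim: k w => [|k IHk] w; first by rewrite in_ball0 => ->.
rewrite in_ballS => /orP[w_in wu y|/existsP[z /andP[z_in ezw]] wu y].
  by apply: (subsetP (ball_subS _ _ _)); apply: IHk.
rewrite in_ballS; apply/orP; right; apply/existsP.
have [zu|zu] := eqVneq z u.
  subst z; exists (Tagged T x); rewrite /lex_rel /= ezw andbT.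
  by apply: (subsetP (ball_mono _ _ (leq0n k))); rewrite in_ball0.
have /card_gt0P[t _] := T_nonempty z.
by exists (Tagged T t); rewrite IHk //= /lex_rel /= ezw.
Qed.

Lemma lex_gdist_across u w (x : T u) (y : T w) : u != w ->
  gdist le (Tagged T x) (Tagged T y) = gdist eG u w.
Proof.
move=> uw; have wu : w != u by rewrite eq_sym.
have w_in : w \in ball eG (gdist eG u w) u by apply/gdist_ball/gdist_lt.
have y_in := ball_untag x w_in wu y.
apply/anti_leq; rewrite gdist_le //=.
by have /ball_tag/gdist_le := gdist_ball (gdist_lt (ball_connect y_in)).
Qed.

Lemma sum_adj_local_dim_le_lex : \sum_u adj_local_dim (eH u) <= local_dim le.
Proof.
have S_res := local_basisP (gdist_resolving_setT lex_irr).
rewrite /local_dim min_local_resolvingE card_sigma_fibers; apply: leq_sum => u _.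
apply: min_local_resolving_le; first exact: gdist2_resolving_setT.
apply/forallP => x; apply/forallP => y; apply/implyP => exy.
move/forallP: S_res => /(_ (Tagged T x))/forallP/(_ (Tagged T y)).
rewrite lex_rel_fiber => /implyP/(_ exy)/existsP[[w z] /andP[Sz dz]].
have [uw|uw] := eqVneq w u; last by rewrite !lex_gdist_across // eqxx in dz.
subst w; apply/existsP; exists z; rewrite inE Sz.
by rewrite -!lex_gdist_fiber.
Qed.

Lemma lex_edge_across_resolved u w (x z : T u) (y : T w) : eG u w -> ~~ eH u x z ->
  gdist le (Tagged T z) (Tagged T x) != gdist le (Tagged T z) (Tagged T y).
Proof.
move=> euw xz; have uw : u != w by apply: contraTneq euw => ->; rewrite eG_irr.
rewrite lex_gdist_fiber lex_gdist_across // gdist2E eH_sym (negbTE xz).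
by rewrite (eqP (_ : gdist eG u w == 1)) ?gdist_eq1 //; case: ifP.
Qed.

Lemma lex_local_dim_le_sum : local_dim le <= \sum_u adj_local_dim (eH u).
Proof.
pose B u := local_basis (eH u) (gdist2 (eH u)).
have B_res u : local_resolving (eH u) (gdist2 (eH u)) (B u).
  exact/local_basisP/gdist2_resolving_setT.
pose S := [set p : L | tagged p \in B (tag p)].
have -> : \sum_u adj_local_dim (eH u) = #|S|.
  by rewrite card_sigma_fibers; apply: eq_bigr => u _; apply: eq_card => x; rewrite !inE.
apply: min_local_resolving_le; first exact: gdist_resolving_setT lex_irr.
apply/forallP => -[u x]; apply/forallP => -[w y]; apply/implyP.
rewrite /lex_rel /= => /orP[euw|/andP[/eqP uw]].
  have [z Bz xz] := resolving_nonneighbor (eH_conn u) (far u x) (B_res u).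
  by apply/existsP; exists (Tagged T z); rewrite inE Bz lex_edge_across_resolved.
subst w; rewrite tagged_asE => exy.
move/forallP: (B_res u) => /(_ x)/forallP/(_ y)/implyP/(_ exy)/existsP[z /andP[Bz dz]].
by apply/existsP; exists (Tagged T z); rewrite inE Bz /= !lex_gdist_fiber.
Qed.

Lemma lex_local_dim : local_dim le = \sum_u adj_local_dim (eH u).
Proof. by apply/anti_leq; rewrite lex_local_dim_le_sum sum_adj_local_dim_le_lex. Qed.
End Lexicographic.

Unset Implicit Arguments. Set Strict Implicit.

Theorem corollary5 (V : finType) (eG : rel V) (T : V -> finType)
  (eH : forall u, rel (T u)) :
  simple_graph eG -> gconnected eG -> 2 <= #|V| ->
  (forall u, simple_graph (eH u)) ->
  (forall u, gconnected (eH u)) ->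
  (forall u, 4 <= radius (eH u) \/ (~ is_tree (eH u) /\ girth_ge (eH u) 7)) ->
  local_dim (@lex_rel V eG T eH) = \sum_(u : V) local_dim (cone_rel (eH u)) /\
  \sum_(u : V) local_dim (cone_rel (eH u)) = \sum_(u : V) adj_local_dim (eH u).
Proof.
move=> [eG_sym eG_irr] eG_conn V_ge2 H_simple H_conn H_large.
have eH_sym u := proj1 (H_simple u); have eH_irr u := proj2 (H_simple u).
have far u v : far_edge (eH u) v.
  exact: far_edge_everywhere (eH_sym u) (eH_irr u) (H_conn u) v (H_large u).
have T_nonempty u : 0 < #|T u|.
  apply: (card_gt0_of_radius_or_cycle (e := eH u)).
  by case: (H_large u) => [|[]]; [left|right].
have cone_sum : \sum_u local_dim (cone_rel (eH u)) = \sum_u adj_local_dim (eH u).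
  by apply: eq_bigr => u _; apply: cone_local_dim.
by rewrite cone_sum; split=> //; apply: lex_local_dim.
Qed.
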